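(* Let $G$ be a finite directed tree rooted at the source $S$ (all edges directed away from $S$), of depth $D(G)\ge1$, in which every edge has rate $c\ge1$, and run the dissemination protocol below with waiting times as defined below. Let $t$ be an integer with $2D(G)-1<t<\lfloor n/c\rfloor$. Then with probability at least $1-C/q$, where $C$ depends only on $G,n,c,t$, the following holds: for every node $u\neq S$ and every node $w\neq u$, one has $\Pi_u(t)\subseteq\Pi_w(t)$ if and only if $w$ is an ancestor of $u$ (a node on the path from $S$ to $u$, $S$ included); moreover the parent of $u$ is the unique node $w\ne u$ that minimizes $\dim\Pi_w(t)$ among all nodes $w\neq u$ with $\Pi_u(t)\subseteq\Pi_w(t)$. In particular the tree is uniquely determined by the collection $\{\Pi_w(t)\}_{w\in V}$.
   Context: Dissemination protocol: $q$ is a prime power, the source holds the space $\Pi_S=\mathbb{F}_q^n$ and we set $\Pi_S(s)=\mathbb{F}_q^n$ for all $s$. Time is slotted, $s=1,2,\dots$; every vector sent in slot $s$ is received before the end of slot $s$. In each slot $s\le\lfloor n/c\rfloor$ the source sends on each outgoing edge $c$ vectors drawn uniformly at random from $\mathbb{F}_q^n$. Every non-source node $v$ has a waiting time $\tau_v$; in every slot $s\ge\tau_v+1$ it sends on each outgoing edge $c$ vectors, each drawn uniformly at random from $\Pi_v(s-1)$. All random draws are mutually independent (given the past). $\Pi_v(s)$ denotes the span of all vectors received by $v$ in slots $1,\dots,s$, with $\Pi_v(0)=\{0\}$. Waiting time (in this tree setting): $\tau_v$ is the first slot $s$ during which the parent of $v$ transmits to $v$ and $\dim\Pi_v(s)\ge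 c+1$. The depth $D(G)$ is the length of the longest path from $S$ to a node. *)

From HB Require Import structures.
From mathcomp Require Import all_boot all_order all_algebra.
Set Implicit Arguments. Unset Strict Implicit. Unset Printing Implicit Defensive.
Import Order.TTheory GRing.Theory Num.Theory.
Local Open Scope ring_scope.

(* A finite directed tree rooted at S, given by its parent map:
   the edges are (par v -> v) for v != S, directed away from S. *)
Definition is_rooted_tree (V : finType) (S : V) (par : V -> V) : Prop :=
  par S = S /\ forall v : V, fconnect par v S.

(* depth of v = length of the path S -> v; D(G) = max depth. *)
Definition depth (V : finType) (S : V) (par : V -> V) : nat :=
  \max_(v : V) findex par v S.

(* w is an ancestor of u (node on the path from S to u, u itself included). *)
Definition ancestor (V : finType) (par : V -> V) (w u : V) : bool :=
  fconnect par u w.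

(* State at the end of a slot: Pi_v (as a square matrix whose row space is
   the subspace) and the flag "tau_v <= current slot". *)
Definition state (F : finFieldType) (V : finType) (n : nat) : Type :=
  ({ffun V -> 'M[F]_n} * {ffun V -> bool})%type.

Definition init_state (F : finFieldType) (V : finType) (S : V) (n : nat)
  : state F V n :=
  ([ffun v => if v == S then 1%:M else 0], [ffun _ => false]).

(* Does node w transmit (on all its outgoing edges) in slot s, given the state
   st at the end of slot s-1? *)
Definition sends (F : finFieldType) (V : finType) (S : V) (n c : nat)
  (s : nat) (st : state F V n) (w : V) : bool :=
  if w == S then (s <= n %/ c)%N else st.2 w.

(* Set from which each of the c vectors on the edge (par v -> v) is drawn
   uniformly in slot s ([set 0] encodes "nothing is sent"). *)
Definition allowed (F : finFieldType) (V : finType) (S : V) (par : V -> V)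
  (n c : nat) (s : nat) (st : state F V n) (v : V) : {set 'rV[F]_n} :=
  if (v != S) && sends S c s st (par v) then
    (if par v == S then setT else [set x : 'rV[F]_n | (x <= st.1 (par v))%MS])
  else [set 0].

(* All draws of slot s: the joint uniform distribution of independent uniform
   draws is the uniform distribution on this product set. *)
Definition draws (F : finFieldType) (V : finType) (S : V) (par : V -> V)
  (n c : nat) (s : nat) (st : state F V n)
  : {set {ffun (V * 'I_c) -> 'rV[F]_n}} :=
  [set f : {ffun (V * 'I_c) -> 'rV[F]_n} |
     [forall p : V * 'I_c, f p \in allowed S par c s st p.1]].

Definition step (F : finFieldType) (V : finType) (S : V) (par : V -> V)
  (n c : nat) (s : nat) (st : state F V n) (f : {ffun (V * 'I_c) -> 'rV[F]_n})
  : state F V n :=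
  let Pi' := [ffun v => if v == S then st.1 v
                        else (st.1 v + \sum_(i < c) <<f (v, i)>>)%MS] in
  (Pi', [ffun v => st.2 v ||
           [&& v != S, sends S c s st (par v) & (c.+1 <= \rank (Pi' v))%N]]).

(* prob k s st E = probability that E holds after running slots s+1..s+k
   starting from state st (end of slot s). *)
Fixpoint prob (F : finFieldType) (V : finType) (S : V) (par : V -> V)
  (n c : nat) (k s : nat) (st : state F V n) (E : state F V n -> bool) : rat :=
  match k with
  | 0 => if E st then 1 else 0
  | k'.+1 =>
      (\sum_(f in draws S par c s.+1 st)
          prob S par c k' s.+1 (step S par s.+1 st f) E)
      / (#|draws S par c s.+1 st|)%:R
  end.

Definition good_event (F : finFieldType) (V : finType) (S : V) (par : V -> V)
  (n : nat) (st : state F V n) : bool :=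
  let Pi := st.1 in
  [forall u : V, (u != S) ==>
     [forall w : V, (w != u) ==> ((Pi u <= Pi w)%MS == ancestor par w u)]]
  &&
  [forall u : V, (u != S) ==>
     ((Pi u <= Pi (par u))%MS &&
      [forall w : V, [&& w != u, w != par u & (Pi u <= Pi w)%MS] ==>
                     (\rank (Pi (par u)) < \rank (Pi w))%N])].

From HB Require Import structures.
From mathcomp Require Import all_boot all_order all_algebra.
From mathcomp Require Import zify lra.
Import Order.TTheory GRing.Theory Num.Theory.
Set Implicit Arguments. Unset Strict Implicit. Unset Printing Implicit Defensive.

(* Write q = #|F| and dep v for the depth of v.  Unless one of a fixed finite
   family of "bad" events, each of probability at most 1/q, happens in some
   slot, the state at the end of slot s satisfies the invariant protocol_inv:
   Pi_S is the whole space, Pi_v <= Pi_(par v), rank Pi_v = c (s + 2 - 2 dep v),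
   v transmits from slot 2 dep v + 1 on, and Pi_x is not contained in Pi_y as
   soon as Pi_x != 0 and y is not an ancestor of x.  The bad events are: a
   received vector is redundant; a received vector brings into Pi_y a fixed
   witness of Pi_x escaping Pi_y; the first vector received by x falls into
   Pi_y.  Each one asks a coordinate drawn uniformly from a subspace P to fall
   into a space W, independent of it, with P not contained in W.  At a slot
   t >= 2 D(G) the invariant gives the event of the theorem, since ranks
   strictly decrease along the path to the root.

   The theorem follows with C = t (|V| c + |V|^2 (c + 1)). *)

Lemma card_bigcup_le (I T : finType) (P : {pred I}) (B : I -> {set T}) :
  (#|\bigcup_(i in P) B i| <= \sum_(i in P) #|B i|)%N.
Proof.
elim/big_rec2: _ => [|i x y _ IH]; first by rewrite cards0.
rewrite cardsU; apply: leq_trans (leq_subr _ _) _; by rewrite leq_add2l.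
Qed.

Lemma card_exists_le (I T : finType) (D : {set T}) (P : I -> pred T) :
  (#|[set f in D | [exists i, P i f]]| <= \sum_i #|[set f in D | P i f]|)%N.
Proof.
have sub : [set f in D | [exists i, P i f]] \subset
           \bigcup_(i in [set: I]) [set f in D | P i f].
  apply/subsetP => f; rewrite inE => /andP [fD /existsP [i Pif]].
  by apply/bigcupP; exists i; rewrite ?inE ?fD.
apply: leq_trans (subset_leq_card sub) _; apply: leq_trans (card_bigcup_le _ _) _.
by apply: eq_leq; apply: eq_bigl => i; rewrite inE.
Qed.

Section ProductSets.
Variables (T R : finType) (A : T -> {set R}).

Definition prodset : {set {ffun T -> R}} :=
  [set f : {ffun T -> R} | [forall p, f p \in A p]].

Definition fupd (f : {ffun T -> R}) (p0 : T) (a : R) : {ffun T -> R} :=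
  [ffun p => if p == p0 then a else f p].

Lemma fupd_in f p0 a : f \in prodset -> a \in A p0 -> fupd f p0 a \in prodset.
Proof.
rewrite !inE => /forallP H Ha; apply/forallP => p; rewrite ffunE.
by case: eqP => [->|]; [|rewrite H].
Qed.

(* The product contains a copy of (slice with f p0 = r0) x A p0. *)
Lemma card_slice_prodset p0 r0 :
  (#|[set g in prodset | g p0 == r0]| * #|A p0| <= #|prodset|)%N.
Proof.
pose pair_upd (u : {ffun T -> R} * R) := fupd u.1 p0 u.2.
rewrite -cardsX -(card_in_imset (f := pair_upd)).
  apply: subset_leq_card; apply/subsetP => f /imsetP [[g a]].
  rewrite inE /= => /andP [gD0 aA] ->; rewrite inE in gD0.
  by case/andP: gD0 => gD _; apply: fupd_in.
move=> [g1 a1] [g2 a2]; rewrite !inE /= => /andP [/andP [_ /eqP g1r] _].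
move=> /andP [/andP [_ /eqP g2r] _] E.
have ea : a1 = a2 by move/ffunP: E => /(_ p0); rewrite !ffunE eqxx.
congr (_, _) => //; apply/ffunP => p; move/ffunP: E => /(_ p); rewrite !ffunE.
by case: eqP => [->|//]; rewrite g1r g2r.
Qed.

Lemma prodset_coord_bound p0 r0 (B : pred {ffun T -> R}) m :
  r0 \in A p0 ->
  (forall g, g \in prodset ->
     #|[set a in A p0 | B (fupd g p0 a)]| * m <= #|A p0|)%N ->
  (#|[set f in prodset | B f]| * m <= #|prodset|)%N.
Proof.
move=> Ar0 H; set D0 := [set g in prodset | g p0 == r0].
(* every f is obtained from a representative with f p0 = r0 *)
have sub : [set f in prodset | B f] \subset
   \bigcup_(g in D0) [set fupd g p0 a | a in [set a in A p0 | B (fupd g p0 a)]].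
  apply/subsetP => f; rewrite inE => /andP [fD Bf].
  have fp0 : f p0 \in A p0 by move: fD; rewrite inE => /forallP.
  have eqf : fupd (fupd f p0 r0) p0 (f p0) = f.
    by apply/ffunP => p; rewrite !ffunE; case: eqP => // ->.
  apply/bigcupP; exists (fupd f p0 r0).
    by rewrite inE fupd_in //= ffunE eqxx.
  by apply/imsetP; exists (f p0) => //; rewrite inE fp0 eqf.
apply: leq_trans (leq_mul (subset_leq_card sub) (leqnn m)) _.
apply: leq_trans (leq_mul (card_bigcup_le _ _) (leqnn m)) _.
rewrite big_distrl /=; apply: leq_trans (card_slice_prodset p0 r0).
rewrite -sum_nat_const; apply: leq_sum => g; rewrite inE => /andP [gD _].
by apply: leq_trans (H g gD); rewrite leq_mul2r leq_imset_card orbT.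
Qed.

End ProductSets.

Section FiniteSubspaces.
Variable F : finFieldType.

Lemma card_rowspace n m (M : 'M[F]_(m, n)) :
  #|[set a : 'rV[F]_n | (a <= M)%MS]| = (#|F| ^ \rank M)%N.
Proof.
set B := row_base M.
have -> : [set a : 'rV[F]_n | (a <= M)%MS] =
          [set (u *m B)%R | u in [set: 'rV[F]_(\rank M)]].
  apply/setP => a; rewrite inE; apply/idP/imsetP.
    by rewrite -(eq_row_base M) => /submxP [D ->]; exists D.
  by move=> [u _ ->]; rewrite -(eq_row_base M) submxMl.
rewrite card_in_imset ?cardsT ?card_mx ?mul1n //.
move=> u v _ _ /eqP; rewrite -subr_eq0 -mulmxBl mulmx_free_eq0 ?row_base_free //.
by rewrite subr_eq0 => /eqP.
Qed.

Lemma card_rowspace_cap n m1 m2 (P : 'M[F]_(m1, n)) (W : 'M[F]_(m2, n)) :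
  ~~ (P <= W)%MS ->
  (#|[set a : 'rV[F]_n | (a <= P)%MS && (a <= W)%MS]| * #|F| <=
   #|[set a : 'rV[F]_n | (a <= P)%MS]|)%N.
Proof.
move=> nPW.
have -> : [set a : 'rV[F]_n | (a <= P)%MS && (a <= W)%MS] =
          [set a : 'rV[F]_n | (a <= P :&: W)%MS].
  by apply/setP => a; rewrite !inE sub_capmx.
rewrite !card_rowspace -expnSr leq_exp2l ?card_finNzRing_gt1 //.
have [le eq_rank] := mxrank_leqif_sup (capmxSl P W).
rewrite ltn_neqAle le andbT eq_rank.
by apply: contra nPW; rewrite sub_capmx submx_refl.
Qed.

Lemma prodset_sub_bound (T : finType) n m (A : T -> {set 'rV[F]_n}) p0
  (Pm : 'M[F]_(m, n)) (W : {ffun T -> 'rV[F]_n} -> 'M[F]_n)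
  (C : pred {ffun T -> 'rV[F]_n}) :
  A p0 = [set a | (a <= Pm)%MS] ->
  (forall f a, W (fupd f p0 a) = W f) -> (forall f a, C (fupd f p0 a) = C f) ->
  (forall f, C f -> ~~ (Pm <= W f)%MS) ->
  (#|[set f in prodset A | (f p0 <= W f)%MS && C f]| * #|F| <= #|prodset A|)%N.
Proof.
move=> eA eW eC nPW.
apply: (@prodset_coord_bound _ _ A p0 0%R); first by rewrite eA inE sub0mx.
move=> g _; case Cg : (C g); last first.
  rewrite (_ : [set a in A p0 | _] = set0) ?cards0 //.
  by apply/setP => a; rewrite !inE eC Cg !andbF.
rewrite eA; apply: leq_trans (card_rowspace_cap (nPW _ Cg)).
rewrite leq_mul2r; apply/orP; right; apply: subset_leq_card.
by apply/subsetP => a; rewrite !inE eW eC Cg ffunE eqxx andbT => /andP [-> ->].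
Qed.

End FiniteSubspaces.

Section RankExchange.
Variables (F : fieldType) (n : nat).
Implicit Types (A : 'M[F]_n) (g z : 'rV[F]_n).

Lemma rank_add_row_le A g : (\rank (A + <<g>>)%MS <= (\rank A).+1)%N.
Proof.
apply: leq_trans (mxrank_adds_leqif _ _).1 _.
by rewrite genmxE -[(\rank A).+1]addn1 leq_add2l rank_leq_row.
Qed.

Lemma rank_add_row A g : ~~ (g <= A)%MS -> \rank (A + <<g>>)%MS = (\rank A).+1.
Proof.
move=> ngA; apply/eqP; rewrite eqn_leq rank_add_row_le /=.
have [le eq_rank] := mxrank_leqif_sup (addsmxSl A <<g>>%MS).
rewrite ltn_neqAle le andbT eq_rank; apply: contra ngA => H.
by apply: submx_trans H; apply: submx_trans (addsmxSr A _); rewrite genmxE.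
Qed.

Lemma exchange A g z :
  (z <= A + <<g>>)%MS -> ~~ (z <= A)%MS -> (g <= A + <<z>>)%MS.
Proof.
move=> zAg nzA.
have sub : (A + <<z>> <= A + <<g>>)%MS by rewrite addsmx_sub addsmxSl genmxE.
have : (A + <<z>> == A + <<g>>)%MS.
  rewrite -(mxrank_leqif_eq sub).2 rank_add_row //.
  apply/eqP/esym/eqP; rewrite eqn_leq rank_add_row_le /=.
  by rewrite -(rank_add_row nzA); apply: mxrankS.
case/andP => _ H; apply: submx_trans H.
by apply: submx_trans (addsmxSr A _); rewrite genmxE.
Qed.

Definition witness_row (A B : 'M[F]_n) : 'rV[F]_n :=
  if [pick i | ~~ (row i A <= B)%MS] is Some i then row i A else 0%R.

Lemma witness_row_sub A B : (witness_row A B <= A)%MS.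
Proof. by rewrite /witness_row; case: pickP => [i _|_]; rewrite ?row_sub ?sub0mx. Qed.

Lemma witness_row_notin A B : ~~ (A <= B)%MS -> ~~ (witness_row A B <= B)%MS.
Proof.
move=> /row_subPn [i niB]; rewrite /witness_row; case: pickP => [j //|H].
by move: (H i); rewrite niB.
Qed.

Lemma not_sub_rank m1 m2 (A : 'M[F]_(m1, n)) (B : 'M[F]_(m2, n)) :
  (\rank B < \rank A)%N -> ~~ (A <= B)%MS.
Proof. by move=> lt; apply/negP => /mxrankS; rewrite leqNgt lt. Qed.

End RankExchange.
Section Tree.
Variables (V : finType) (S : V) (par : V -> V).
Hypothesis tree : is_rooted_tree S par.

Definition node_depth (v : V) : nat := findex par v S.
Local Notation dep := node_depth.

Lemma par_root : par S = S. Proof. by case: tree. Qed.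
Lemma to_root v : fconnect par v S. Proof. by case: tree. Qed.
Lemma depth_root : dep S = 0. Proof. exact: findex0. Qed.

Lemma depth_par v : v != S -> dep v = (dep (par v)).+1.
Proof. by move=> vS; apply: fconnect_findex; [exact: to_root | rewrite eq_sym]. Qed.

Lemma depth_gt0 v : v != S -> 0 < dep v.
Proof. by move/depth_par ->. Qed.

Lemma depth_le v : dep v <= depth S par.
Proof. exact: (leq_bigmax v). Qed.

Lemma depth_iter k v : dep (iter k par v) = dep v - k.
Proof.
elim: k => [|k IH]; first by rewrite subn0.
rewrite iterS subnS -IH.
case: (eqVneq (iter k par v) S) => [->|/depth_par ->]; last by [].
by rewrite par_root depth_root.
Qed.

Lemma root_ancestor y : fconnect par S y -> y = S.
Proof.
move/iter_findex <-; elim: (findex par S y) => //= k ->; exact: par_root.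
Qed.

Lemma ancestor_par u w : fconnect par u w -> w != u -> fconnect par (par u) w.
Proof.
move=> uw wu; move: (iter_findex uw) => E.
have : findex par u w != 0 by rewrite findex_eq0 eq_sym.
case: (findex par u w) E => // k E _; rewrite -E iterSr; exact: fconnect_iter.
Qed.

Lemma ancestor_depth x w : fconnect par x w -> w != x -> dep w < dep x.
Proof.
move=> xw wx; have xS : x != S.
  by apply: contraNneq wx => xS; move: xw; rewrite xS => /root_ancestor ->.
rewrite -(iter_findex xw) depth_iter; have := depth_gt0 xS.
have : findex par x w != 0 by rewrite findex_eq0 eq_sym.
by case: (findex par x w) => // k _ p; rewrite ltn_subrL p.
Qed.

End Tree.

Section ProbLowerBound.
Variables (F : finFieldType) (V : finType) (S : V) (par : V -> V) (n c : nat).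
Local Notation state := (state F V n).
Local Notation draws := (draws S par c).
Local Notation draw := {ffun V * 'I_c -> 'rV[F]_n}.

Lemma draws_gt0 s (st : state) : 0 < #|draws s st|.
Proof.
apply/card_gt0P; exists [ffun => 0%R]; rewrite inE; apply/forallP => p.
rewrite ffunE /allowed; case: ifP => _; last by rewrite inE.
by case: ifP => _; rewrite inE ?sub0mx.
Qed.

Lemma prob_ge0 k s (st : state) E : (0 <= prob S par c k s st E)%R.
Proof.
elim: k s st => [|k IH] s st /=; first by case: (E st).
by apply: divr_ge0; [apply: sumr_ge0 => f _; exact: IH | exact: ler0n].
Qed.

(* Averaging: if N values are all >= 0, and >= L <= 1 except for at most
   b <= y N of them, their sum is >= (N - b) L >= (L - y) N. *)
Lemma mean_off_bad_bound (R : realFieldType) (N b y L : R) :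
  (0 <= b -> b <= y * N -> L <= 1 -> (L - y) * N <= (N - b) * L)%R.
Proof. by move=> b0 byN L1; nra. Qed.

Variables (t K : nat) (Inv : nat -> state -> Prop) (E : pred state).
Variable Bad : nat -> state -> pred draw.
Hypothesis Inv_E : forall st, Inv t st -> E st.
Hypothesis Bad_rare : forall s st, s < t -> Inv s st ->
  #|[set f in draws s.+1 st | Bad s st f]| * #|F| <= K * #|draws s.+1 st|.
Hypothesis Inv_step : forall s st f, s < t -> Inv s st -> f \in draws s.+1 st ->
  ~~ Bad s st f -> Inv s.+1 (step S par s.+1 st f).

Lemma prob_union_bound k s st : Inv s st -> s + k = t ->
  (1 - (k * K)%:R / #|F|%:R <= prob S par c k s st E)%R.
Proof.
elim: k s st => [|k IH] s st Ist skt.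
  by move: skt Ist; rewrite addn0 => -> /Inv_E /= ->; rewrite mul0n mul0r subr0.
have s_lt : s < t by lia.
rewrite /=; set D := draws s.+1 st; set B := [set f in D | Bad s st f].
set L : rat := (1 - (k * K)%:R / #|F|%:R)%R.
set y : rat := (K%:R / #|F|%:R)%R.
have q0 : (0 < #|F|%:R :> rat)%R.
  by rewrite ltr0n; apply: ltn_trans (card_finNzRing_gt1 F).
have BD : B \subset D by apply/subsetP => f; rewrite inE => /andP [].
(* outside B the invariant survives, so the conditional probability is >= L *)
have sum_ge : ((#|D| - #|B|)%:R * L <=
    \sum_(f in D) prob S par c k s.+1 (step S par s.+1 st f) E)%R.
  rewrite (big_setID B) /= (setIidPr BD) -cardsDS // -sumr_const.
  rewrite -[X in (X <= _)%R]add0r; apply: lerD.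
    by apply: sumr_ge0 => f _; exact: prob_ge0.
  rewrite mulr_suml; apply: ler_sum => f /setDP [fD fB].
  rewrite mul1r; apply: IH; last by lia.
  by apply: Inv_step => //; move: fB; rewrite inE fD.
rewrite ler_pdivlMr ?ltr0n ?draws_gt0 //; apply: le_trans sum_ge.
rewrite natrB ?subset_leq_card //.
have -> : (1 - (k.+1 * K)%:R / #|F|%:R = L - y :> rat)%R.
  by rewrite /L /y mulSn natrD mulrDl opprD addrAC addrA.
apply: mean_off_bad_bound; [exact: ler0n | | by rewrite /L lerBlDr lerDl divr_ge0].
by rewrite /y mulrAC ler_pdivlMr // -!natrM ler_nat Bad_rare.
Qed.

End ProbLowerBound.

Section Protocol.
Variables (F : finFieldType) (V : finType) (S : V) (par : V -> V) (n c' t : nat).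
Hypothesis tree : is_rooted_tree S par.
Hypothesis t_lt : t < n %/ c'.+1.
Local Notation c := c'.+1.
Local Notation dep := (node_depth S par).
Local Notation state := (state F V n).
Local Notation draw := {ffun V * 'I_c -> 'rV[F]_n}.

(* The source never saturates before slot t: t c < n. *)
Lemma tc_lt_n : t * c < n.
Proof. by move: t_lt; rewrite leq_divRL //; lia. Qed.

Record protocol_inv (s : nat) (st : state) : Prop := ProtocolInv {
  inv_root : st.1 S = 1%:M%R;
  inv_nested : forall v, v != S -> (st.1 v <= st.1 (par v))%MS;
  inv_rank : forall v, v != S -> \rank (st.1 v) = c * (s + 2 - 2 * dep v);
  inv_active : forall v, v != S -> st.2 v = (2 * dep v <= s);
  inv_generic : forall x y, x != S -> ~~ fconnect par x y ->
    0 < \rank (st.1 x) -> ~~ (st.1 x <= st.1 y)%MS }.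

Lemma inv_init : protocol_inv 0 (init_state F S n).
Proof.
split => /= [|v vS|v vS|v vS|x y xS _]; rewrite ffunE ?eqxx ?(negbTE vS) //.
- exact: sub0mx.
- by rewrite mxrank0; have := depth_gt0 tree vS; lia.
- by have := depth_gt0 tree vS; lia.
- by rewrite (negbTE xS) mxrank0.
Qed.

Lemma inv_ancestor_sub s st u w :
  protocol_inv s st -> fconnect par u w -> (st.1 u <= st.1 w)%MS.
Proof.
case=> _ Hsub _ _ _ H; rewrite -(iter_findex H).
elim: (findex par u w) => [|k IH] /=; first exact: submx_refl.
apply: submx_trans IH _.
case: (eqVneq (iter k par u) S) => [->|nS]; last exact: Hsub.
by rewrite (par_root tree) submx_refl.
Qed.

Lemma inv_rank_pos st u : protocol_inv t st -> 2 * depth S par <= t -> u != S ->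
  0 < \rank (st.1 u).
Proof.
move=> I tD uS; rewrite (inv_rank I uS) muln_gt0 /=.
by have := depth_le S par u; lia.
Qed.

Lemma inv_rank_ancestor st x w : protocol_inv t st -> 2 * depth S par <= t ->
  x != S -> fconnect par x w -> w != x -> \rank (st.1 x) < \rank (st.1 w).
Proof.
move=> I tD xS xw wx; have dlt := ancestor_depth tree xw wx.
rewrite (inv_rank I xS); case: (eqVneq w S) => [->|wS].
  rewrite (inv_root I) mxrank1; apply: leq_ltn_trans tc_lt_n.
  by rewrite mulnC leq_mul2r; have := depth_gt0 tree xS; lia.
by rewrite (inv_rank I wS) ltn_pmul2l //; have := depth_le S par x; lia.
Qed.

Lemma inv_good_event st : protocol_inv t st -> 2 * depth S par <= t ->
  good_event S par st.
Proof.
move=> I tD.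
have sub_anc u w : u != S -> (st.1 u <= st.1 w)%MS = fconnect par u w.
  move=> uS; case a : (fconnect par u w); first exact: inv_ancestor_sub I a.
  by apply/negbTE; apply: (inv_generic I); rewrite ?a ?inv_rank_pos.
apply/andP; split.
  apply/forallP => u; apply/implyP => uS; apply/forallP => w; apply/implyP => _.
  by rewrite /ancestor sub_anc.
apply/forallP => u; apply/implyP => uS; rewrite (inv_nested I uS) /=.
apply/forallP => w; apply/implyP => /and3P [wu wpu]; rewrite sub_anc // => uw.
have puw := ancestor_par uw wu.
have puS : par u != S.
  by apply: contraNneq wpu => pS; move: puw; rewrite pS => /(root_ancestor tree) ->.
exact: inv_rank_ancestor.
Qed.

Definition receives (s : nat) (st : state) (v : V) : bool :=
  (v != S) && sends S c s.+1 st (par v).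

Section Slot.
Variables (s : nat) (st : state).
Hypothesis I : protocol_inv s st.
Hypothesis s_lt : s < t.

Lemma receives_iff v : v != S -> receives s st v = (2 * dep v <= s + 2).
Proof.
move=> vS; rewrite /receives vS /sends /=.
case: eqP => [pS|/eqP pS].
  have := depth_par tree vS; rewrite pS depth_root => ->.
  have -> : s.+1 <= n %/ c by exact: leq_trans s_lt (ltnW t_lt).
  lia.
by rewrite (inv_active I) // (depth_par tree vS); lia.
Qed.

Lemma allowed_receives v : receives s st v ->
  allowed S par c s.+1 st v = [set a | (a <= st.1 (par v))%MS].
Proof.
move=> r; rewrite /allowed; move: r; rewrite /receives => ->.
case: eqP => [->|//]; rewrite (inv_root I).
by apply/setP => a; rewrite !inE submx1.
Qed.

Lemma allowed_silent v :
  ~~ receives s st v -> allowed S par c s.+1 st v = [set 0%R].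
Proof. by rewrite /allowed /receives => /negbTE ->. Qed.

Lemma rank_room v : v != S -> \rank (st.1 v) + c < n.
Proof.
move=> vS; apply: leq_ltn_trans tc_lt_n; rewrite (inv_rank I vS) -mulnSr mulnC.
by rewrite leq_mul2r; have := depth_gt0 tree vS; lia.
Qed.

(* A receiving node lags its parent by more than c dimensions, so the c
   vectors it receives can all be new. *)
Lemma rank_gap v : receives s st v -> \rank (st.1 v) + c < \rank (st.1 (par v)).
Proof.
move=> r; have vS : v != S by case/andP: r.
case: (eqVneq (par v) S) => [->|pS]; first by rewrite (inv_root I) mxrank1 rank_room.
have := receives_iff vS; rewrite r (depth_par tree vS) => /esym H.
rewrite !(inv_rank I) // (depth_par tree vS).
have -> : s + 2 - 2 * dep (par v) = (s + 2 - 2 * (dep (par v)).+1) + 2 by lia.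
by rewrite mulnDr; lia.
Qed.

(* If x receives and y is not an ancestor of x, then Pi_(par x) escapes Pi_y;
   this is what makes the first vector received by x escape Pi_y. *)
Lemma parent_escapes x y : x != S -> receives s st x -> ~~ fconnect par x y ->
  ~~ (st.1 (par x) <= st.1 y)%MS.
Proof.
move=> xS rx nxy; have yS : y != S.
  by apply: contraNneq nxy => ->; exact: to_root.
case: (eqVneq (par x) S) => [pS|pS].
  rewrite pS (inv_root I); apply: not_sub_rank; rewrite mxrank1.
  by apply: leq_ltn_trans (rank_room yS); rewrite leq_addr.
apply: (inv_generic I) => //.
  by apply: contra nxy; apply: connect_trans; exact: fconnect1.
move: rx; rewrite /receives /sends xS (negbTE pS) /= (inv_active I) // => h.
by rewrite (inv_rank I) // muln_gt0 /=; lia.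
Qed.

End Slot.

Definition prefix_span (f : draw) (v : V) (i : nat) : 'M[F]_n :=
  (\sum_(j < i) <<f (v, inord j)>>)%MS.

Lemma prefix_span_full (f : draw) (v : V) :
  (\sum_(j < c) <<f (v, j)>>)%MS = prefix_span f v c.
Proof. by apply: eq_bigr => j _; rewrite inord_val. Qed.

Lemma prefix_span_S (f : draw) (v : V) k :
  prefix_span f v k.+1 = (prefix_span f v k + <<f (v, inord k)>>)%MS.
Proof. by rewrite /prefix_span big_ord_recr. Qed.

Lemma rank_prefix_le (A : 'M[F]_n) (f : draw) (v : V) k :
  \rank (A + prefix_span f v k)%MS <= \rank A + k.
Proof.
elim: k => [|k IH]; first by rewrite /prefix_span big_ord0 addsmx0 addn0.
rewrite prefix_span_S addsmxA; apply: leq_trans (rank_add_row_le _ _) _.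
by rewrite addnS ltnS.
Qed.

Lemma prefix_span_fupd (f : draw) (v : V) i p a :
  (forall j, j < i -> (v, inord j) != p) ->
  prefix_span (fupd f p a) v i = prefix_span f v i.
Proof.
move=> H; apply: eq_bigr => j _; rewrite ffunE.
by have := H j (ltn_ord j); case: eqP.
Qed.

Lemma prefix_span_fupd_later (f : draw) (v : V) (i : 'I_c) a :
  prefix_span (fupd f (v, i) a) v i = prefix_span f v i.
Proof.
apply: prefix_span_fupd => j lt_ji; apply/negP => /eqP [/(congr1 val)].
by rewrite /= inordK ?(ltn_trans lt_ji) // => eq_ji; rewrite eq_ji ltnn in lt_ji.
Qed.

Lemma prefix_span_fupd_other (f : draw) (v w : V) j k a : w != v ->
  prefix_span (fupd f (w, j) a) v k = prefix_span f v k.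
Proof.
move=> wv; apply: prefix_span_fupd => j' _; apply/negP => /eqP [ewv _].
by rewrite ewv eqxx in wv.
Qed.

Definition next_span (st : state) (f : draw) (v : V) : 'M[F]_n :=
  (st.1 v + prefix_span f v c)%MS.

(* A vector witnessing that Pi_x (or, when Pi_x = 0, Pi_(par x)) escapes Pi_y:
   it must stay outside Pi_y in the next slot. *)
Definition sep_vec (st : state) (x y : V) : 'rV[F]_n :=
  if \rank (st.1 x) == 0 then witness_row (st.1 (par x)) (st.1 y)
  else witness_row (st.1 x) (st.1 y).

(* The bad events of a slot, each of probability at most 1/q:
   - (x, i): the i-th vector received by x is redundant;
   - (x, y, i): the i-th vector received by y brings sep_vec x y into Pi_y;
   - (x, y): x receives its first vector, and it falls into the new Pi_y.
   Each is "a guard on the state, and coordinate bad_coord e of the draw lies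
   in the space bad_target e, under the side condition bad_side e". *)
Local Notation bad_index := ((V * 'I_c) + (V * V * 'I_c) + (V * V))%type.

Definition bad_guard (s : nat) (st : state) (e : bad_index) : bool :=
  match e with
  | inl (inl (x, _)) => receives s st x
  | inl (inr (x, y, _)) => [&& x != S, ~~ fconnect par x y & receives s st y]
  | inr (x, y) =>
      [&& x != S, \rank (st.1 x) == 0, receives s st x & ~~ fconnect par x y]
  end.

Definition bad_coord (e : bad_index) : V * 'I_c :=
  match e with
  | inl (inl p) => p
  | inl (inr (_, y, i)) => (y, i)
  | inr (x, _) => (x, ord0)
  end.

Definition bad_target (st : state) (e : bad_index) (f : draw) : 'M[F]_n :=
  match e with
  | inl (inl (x, i)) => (st.1 x + prefix_span f x i)%MS
  | inl (inr (x, y, i)) => (st.1 y + prefix_span f y i + <<sep_vec st x y>>)%MS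
  | inr (_, y) => next_span st f y
  end.

Definition bad_side (st : state) (e : bad_index) (f : draw) : bool :=
  if e is inr (x, y) then ~~ (sep_vec st x y <= next_span st f y)%MS else true.

Definition bad (s : nat) (st : state) (e : bad_index) (f : draw) : bool :=
  [&& bad_guard s st e, (f (bad_coord e) <= bad_target st e f)%MS
    & bad_side st e f].

Section BadEvents.
Variables (s : nat) (st : state) (e : bad_index).
Hypothesis I : protocol_inv s st.
Hypothesis s_lt : s < t.
Hypothesis guard : bad_guard s st e.

Lemma bad_coord_allowed :
  allowed S par c s.+1 st (bad_coord e).1 =
  [set a | (a <= st.1 (par (bad_coord e).1))%MS].
Proof.
apply: allowed_receives => //; move: guard.
by case: e => [[[x i]|[[x y] i]]|[x y]] /=; [|case/and3P|case/and4P].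
Qed.

Lemma bad_target_fupd (f : draw) a :
  bad_target st e (fupd f (bad_coord e) a) = bad_target st e f.
Proof.
move: guard; case: e => [[[x i]|[[x y] i]]|[x y]] /= g.
- by rewrite prefix_span_fupd_later.
- by rewrite prefix_span_fupd_later.
- rewrite /next_span prefix_span_fupd_other //.
  by case/and4P: g => _ _ _; apply: contraNneq => ->; exact: connect0.
Qed.

Lemma bad_side_fupd (f : draw) a :
  bad_side st e (fupd f (bad_coord e) a) = bad_side st e f.
Proof.
move: guard; case: e => [[[x i]|[[x y] i]]|[x y]] //= g.
rewrite /next_span prefix_span_fupd_other //.
by case/and4P: g => _ _ _; apply: contraNneq => ->; exact: connect0.
Qed.

Lemma bad_escape (f : draw) : bad_side st e f ->
  ~~ (st.1 (par (bad_coord e).1) <= bad_target st e f)%MS.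
Proof.
move: guard; case: e => [[[x i]|[[x y] i]]|[x y]] /= g side.
- apply: not_sub_rank; apply: leq_ltn_trans (rank_prefix_le _ _ _ _) _.
  by apply: ltn_trans (rank_gap I s_lt g); rewrite ltn_add2l.
- case/and3P: g => _ _ ry; apply: not_sub_rank.
  apply: leq_ltn_trans (rank_add_row_le _ _) _.
  apply: leq_ltn_trans (_ : (\rank (st.1 y) + i).+1 < _).
    by rewrite ltnS rank_prefix_le.
  by apply: leq_ltn_trans (rank_gap I s_lt ry); rewrite -addnS leq_add2l.
- apply: contra side => H; apply: submx_trans H.
  by case/and4P: g => _ r0 _ _; rewrite /sep_vec r0 witness_row_sub.
Qed.

Lemma bad_rare :
  #|[set f in draws S par c s.+1 st | bad s st e f]| * #|F| <=
  #|draws S par c s.+1 st|.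
Proof.
have -> : [set f in draws S par c s.+1 st | bad s st e f] =
  [set f in draws S par c s.+1 st |
     (f (bad_coord e) <= bad_target st e f)%MS && bad_side st e f].
  by apply/setP => f; rewrite !inE /bad guard.
apply: (prodset_sub_bound (A := fun p : V * 'I_c => allowed S par c s.+1 st p.1)
          (p0 := bad_coord e) bad_coord_allowed).
- exact: bad_target_fupd.
- exact: bad_side_fupd.
- exact: bad_escape.
Qed.

End BadEvents.

Lemma some_bad_rare s st : protocol_inv s st -> s < t ->
  #|[set f in draws S par c s.+1 st | [exists e, bad s st e f]]| * #|F| <=
  #|{: bad_index}| * #|draws S par c s.+1 st|.
Proof.
move=> I s_lt; apply: leq_trans (leq_mul (card_exists_le _ _) (leqnn _)) _.
rewrite big_distrl /= -sum_nat_const; apply: leq_sum => e _.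
case g : (bad_guard s st e); first exact: bad_rare.
rewrite (_ : [set f in _ | _] = set0) ?cards0 //.
by apply/setP => f; rewrite !inE /bad g andbF.
Qed.

Section GoodDraw.
Variables (s : nat) (st : state) (f : draw).
Hypothesis I : protocol_inv s st.
Hypothesis s_lt : s < t.
Hypothesis f_drawn : f \in draws S par c s.+1 st.
Hypothesis no_bad : forall e, ~~ bad s st e f.
Let st' := step S par s.+1 st f.

Lemma draw_allowed v i : f (v, i) \in allowed S par c s.+1 st v.
Proof. by move: f_drawn; rewrite inE => /forallP /(_ (v, i)). Qed.

Lemma draw_receives v i : receives s st v -> (f (v, i) <= st.1 (par v))%MS.
Proof.
by move=> r; have := draw_allowed v i; rewrite (allowed_receives I r) inE.
Qed.

Lemma prefix_span_silent v k (A : 'M[F]_n) :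
  ~~ receives s st v -> (prefix_span f v k <= A)%MS.
Proof.
move=> r; apply/sumsmx_subP => i _; have := draw_allowed v (inord i).
by rewrite (allowed_silent r) inE => /eqP ->; rewrite genmx0 sub0mx.
Qed.

Lemma step_space v : st'.1 v = if v == S then st.1 v else next_span st f v.
Proof. by rewrite /st' /step /= ffunE prefix_span_full. Qed.

Lemma step_sup v : (st.1 v <= st'.1 v)%MS.
Proof. by rewrite step_space; case: eqP => _; rewrite ?submx_refl ?addsmxSl. Qed.

Lemma rank_next_silent v : ~~ receives s st v ->
  \rank (next_span st f v) = \rank (st.1 v).
Proof. by move=> r; rewrite /next_span (addsmx_idPl (prefix_span_silent c _ r)). Qed.

(* Without redundant vectors, a receiving node gains exactly c dimensions. *)
Lemma rank_next_receives v : receives s st v ->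
  \rank (next_span st f v) = \rank (st.1 v) + c.
Proof.
move=> r; rewrite /next_span.
suff H k : k <= c -> \rank (st.1 v + prefix_span f v k)%MS = \rank (st.1 v) + k.
  exact: H.
elim: k => [|k IH] kc; first by rewrite /prefix_span big_ord0 addsmx0 addn0.
rewrite prefix_span_S addsmxA rank_add_row; first by rewrite (IH (ltnW kc)) addnS.
have := no_bad (inl (inl (v, inord k))); rewrite /bad /= r /= andbT.
by rewrite inordK.
Qed.

Lemma step_rank v : v != S -> \rank (st'.1 v) = c * (s.+1 + 2 - 2 * dep v).
Proof.
move=> vS; rewrite step_space (negbTE vS).
have := receives_iff I s_lt vS; case r : (receives s st v) => /esym E.
  rewrite rank_next_receives // (inv_rank I) //.
  have -> : s.+1 + 2 - 2 * dep v = (s + 2 - 2 * dep v) + 1 by lia.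
  by rewrite mulnDr muln1.
rewrite rank_next_silent ?r // (inv_rank I) //.
have -> : s.+1 + 2 - 2 * dep v = 0 by lia.
by have -> : s + 2 - 2 * dep v = 0 by lia.
Qed.

Lemma step_nested v : v != S -> (st'.1 v <= st'.1 (par v))%MS.
Proof.
move=> vS; rewrite step_space (negbTE vS) addsmx_sub.
rewrite (submx_trans (inv_nested I vS) (step_sup _)) /=.
apply: submx_trans (step_sup (par v)).
case r : (receives s st v); last by apply: prefix_span_silent; rewrite r.
by apply/sumsmx_subP => i _; rewrite genmxE draw_receives.
Qed.

Lemma step_active v : v != S -> st'.2 v = (2 * dep v <= s.+1).
Proof.
move=> vS; rewrite /st' /step /= !ffunE -/st' (inv_active I vS).
rewrite andbA -/(receives s st v) (receives_iff I s_lt vS).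
have := step_rank vS; rewrite /st' /step /= ffunE => ->.
case: (ltngtP (2 * dep v) s.+1) => h.
- by have -> : 2 * dep v <= s by lia.
- have small : c * (s.+1 + 2 - 2 * dep v) <= c.
    by rewrite -[leqRHS]muln1 leq_mul2l; apply/orP; right; lia.
  by rewrite leqNgt (ltnW h) ltnNge small andbF.
- have -> : s.+1 + 2 - 2 * dep v = 2 by lia.
  by apply/orP; right; apply/andP; split; lia.
Qed.

(* The separating vector of (x, y) stays out of Pi_y: no received vector
   can bring it in (by the exchange property). *)
Lemma sep_vec_stays_out x y : x != S -> ~~ fconnect par x y ->
  ~~ (sep_vec st x y <= st.1 y)%MS -> ~~ (sep_vec st x y <= next_span st f y)%MS.
Proof.
move=> xS nxy nz; rewrite /next_span.
case r : (receives s st y); last first.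
  by rewrite (addsmx_idPl (prefix_span_silent c _ (negbT r))).
suff K k : k <= c -> ~~ (sep_vec st x y <= st.1 y + prefix_span f y k)%MS.
  exact: K.
elim: k => [|k IH] kc; first by rewrite /prefix_span big_ord0 addsmx0.
rewrite prefix_span_S addsmxA; apply/negP => zk.
have := no_bad (inl (inr (x, y, inord k))).
rewrite /bad /= xS nxy r /= andbT inordK //.
by rewrite (exchange zk (IH (ltnW kc))).
Qed.

Lemma step_generic x y : x != S -> ~~ fconnect par x y -> 0 < \rank (st'.1 x) ->
  ~~ (st'.1 x <= st'.1 y)%MS.
Proof.
move=> xS nxy pos.
have yS : y != S by apply: contraNneq nxy => ->; exact: to_root.
rewrite (step_space y) (negbTE yS).
have out := sep_vec_stays_out xS nxy; rewrite /sep_vec in out.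
case rx0 : (\rank (st.1 x) == 0) in out *; last first.
  have esc : ~~ (st.1 x <= st.1 y)%MS.
    by apply: (inv_generic I) => //; rewrite lt0n rx0.
  apply: contra (out (witness_row_notin esc)) => H; apply: submx_trans H.
  exact: submx_trans (witness_row_sub _ _) (step_sup x).
(* x receives for the first time; its first vector escapes the new Pi_y *)
have rx : receives s st x.
  apply/negPn/negP => nr; move: pos.
  by rewrite step_space (negbTE xS) rank_next_silent // (eqP rx0).
have nz := out (witness_row_notin (parent_escapes I s_lt xS rx nxy)).
have nf := no_bad (inr (x, y)).
rewrite /bad /= xS rx0 rx nxy /sep_vec rx0 nz /= andbT in nf.
apply: contra nf; apply: submx_trans; rewrite step_space (negbTE xS).
apply: submx_trans (addsmxSr _ _); rewrite -prefix_span_full.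
by apply: (sumsmx_sup ord0) => //; rewrite genmxE.
Qed.

Lemma inv_step : protocol_inv s.+1 st'.
Proof.
split.
- by rewrite step_space eqxx (inv_root I).
- exact: step_nested.
- exact: step_rank.
- exact: step_active.
- exact: step_generic.
Qed.

End GoodDraw.

Lemma card_bad_index : #|{: bad_index}| = #|V| * c + #|V| ^ 2 * c.+1.
Proof.
by rewrite !card_sum !card_prod card_ord -addnA [#|V| ^ 2 * _]mulnSr expnS expn1.
Qed.

Lemma prob_good_event : 2 * depth S par <= t ->
  (1 - (t * #|{: bad_index}|)%:R / #|F|%:R <=
   prob S par c t 0 (init_state F S n) (@good_event F V S par n))%R.
Proof.
move=> tD; apply: (prob_union_bound (Inv := protocol_inv)
  (Bad := fun s st f => [exists e, bad s st e f])) inv_init (add0n t).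
- by move=> st I; exact: inv_good_event.
- by move=> s st s_lt I; exact: some_bad_rare.
- by move=> s st f s_lt I fD /existsPn; exact: inv_step.
Qed.

End Protocol.

Local Open Scope ring_scope.

Theorem theorem3 (V : finType) (S : V) (par : V -> V) (n c t : nat) :
  is_rooted_tree S par ->
  (1 <= depth S par)%N ->
  (1 <= c)%N ->
  (2 * depth S par - 1 < t)%N ->
  (t < n %/ c)%N ->
  exists C : rat, forall F : finFieldType,
    1 - C / (#|F|)%:R <=
    prob S par c t 0 (init_state F S n) (@good_event F V S par n).
Proof.
move=> tree _ c_gt0 tD.
case: c c_gt0 => [//|c'] _ t_lt.
exists (t * (#|V| * c'.+1 + #|V| ^ 2 * c'.+2))%:R => F.
rewrite -(card_bad_index V c').
by apply: prob_good_event => //; lia.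
Qed.
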